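(* Let $p$ be an odd prime, $\ell$ an integer not divisible by $p$, $a$ the remainder of $\ell$ modulo $p$ and $a_0=\lfloor\ell/p\rfloor$. Let $\nu_i=\lfloor\frac{a+i\ell}{p}\rfloor$ and $n_i=\min_{0\le j\le p-1-i}(\nu_{i+j}-\nu_j)$ for $0\le i\le p-1$. Then for every $0\le i\le p-1$, $$n_i=ia_0+\Big\lfloor i\frac{a}{p}\Big\rfloor+\epsilon_i,$$ where $\epsilon_i=1$ if $p-i\in E$ and $\epsilon_i=0$ otherwise.
   Context: For a real number $x$, $\operatorname{frac}(x)=x-\lfloor x\rfloor$. The set $E$ is defined as $E=\{h\in\mathbb{Z}: 1\le h<p,\ \text{and for all integers } 1\le h'<h,\ \operatorname{frac}(h'a/p)>\operatorname{frac}(ha/p)\}$. *)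

From mathcomp Require Import all_boot all_order all_algebra.
Set Implicit Arguments. Unset Strict Implicit. Unset Printing Implicit Defensive.
Import Order.TTheory GRing.Theory Num.Theory.
Local Open Scope ring_scope.

Definition frac (x : rat) : rat := x - (Num.floor x)%:~R.

Definition in_E (p : nat) (a : int) (h : nat) : bool :=
  [&& (1 <= h)%N, (h < p)%N &
  [forall h' : 'I_h, (1 <= h')%N ==>
    (frac ((h : int)%:~R * a%:~R / (p : int)%:~R)
      < frac (((nat_of_ord h') : int)%:~R * a%:~R / (p : int)%:~R))]].

Definition rem_a (p : nat) (l : int) : int := (l %% (p : int))%Z.
Definition a0 (p : nat) (l : int) : int := Num.floor (l%:~R / (p : int)%:~R : rat).

Definition nu (p : nat) (l : int) (i : nat) : int :=
  Num.floor (((rem_a p l) + (i : int) * l)%:~R / (p : int)%:~R : rat).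

(* n_i = min_{0 <= j <= p-1-i} (nu_{i+j} - nu_j); the seed (j = 0 term) is in range *)
Definition n_ (p : nat) (l : int) (i : nat) : int :=
  \big[Num.min/(nu p l i - nu p l 0)]_(j < p - i) (nu p l (i + j) - nu p l j).

Definition eps (p : nat) (l : int) (i : nat) : int :=
  if in_E p (rem_a p l) (p - i) then 1 else 0.

From Pilot Require Import Defs.
From mathcomp Require Import all_boot all_order all_algebra.
From mathcomp Require Import zify ring.
Set Implicit Arguments. Unset Strict Implicit.
Import Order.TTheory GRing.Theory Num.Theory.

(* Write l = a0 p + a with 0 < a < p.  Then
     nu_(i+j) - nu_j = i a0 + floor(i a / p) + [p <= (i a mod p) + ((j+1) a mod p)],
   so n_i exceeds i a0 + floor(i a / p), by exactly 1, iff the carry occurs for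
   every m = j + 1 in [1, p - i].  Since (i a mod p) + ((p - i) a mod p) = p, this
   says (m a mod p) >= ((p - i) a mod p) for all such m, and as these residues are
   distinct it says that p - i is a new strict minimum of frac(m a / p), i.e. that
   p - i lies in E. *)

Section ResiduesModPrime.

Variables (p A : nat).
Hypotheses (p_pr : prime p) (A_gt0 : (0 < A)%N) (A_ltp : (A < p)%N).

Lemma modn_mul_gt0 k : (0 < k < p)%N -> (0 < (k * A) %% p)%N.
Proof.
move=> /andP[k0 kp]; rewrite lt0n; apply/negP => /eqP kA0.
have : (p %| k * A)%N by rewrite /dvdn kA0.
by rewrite Euclid_dvdM // => /orP[] /dvdn_leq; lia.
Qed.

Lemma modn_mul_neq m n : (0 < m)%N -> (m < n < p)%N -> (m * A) %% p != (n * A) %% p.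
Proof.
move=> m0 /andP[mn np]; apply/negP => /eqP eq_mod.
have : (n * A == m * A %[mod p])%N by rewrite eq_mod.
rewrite eqn_mod_dvd ?leq_mul2r ?(ltnW mn) ?orbT // -mulnBl Euclid_dvdM //.
by case/orP => /dvdn_leq; lia.
Qed.

Lemma modn_mul_compl i : (0 < i < p)%N -> ((i * A) %% p + ((p - i) * A) %% p = p)%N.
Proof.
move=> /andP[i0 ip]; have p0 := prime_gt0 p_pr.
have r1 : (0 < (i * A) %% p)%N by apply: modn_mul_gt0; lia.
have r2 : (0 < ((p - i) * A) %% p)%N by apply: modn_mul_gt0; lia.
have := ltn_pmod (i * A) p0; have := ltn_pmod ((p - i) * A) p0.
have : (p %| (i * A) %% p + ((p - i) * A) %% p)%N.
  by rewrite /dvdn modnDm -mulnDl subnKC ?(ltnW ip) // modnMr.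
case/dvdnP => k eq_k; rewrite eq_k in r1 r2 *.
by case: k eq_k r1 r2 => [|[|k]]; rewrite ?mul1n //; lia.
Qed.

End ResiduesModPrime.

Local Open Scope ring_scope.

Lemma floor_divz (x d : int) : 0 < d -> Num.floor (x%:~R / d%:~R : rat) = (x %/ d)%Z.
Proof.
move=> d0; apply: floor_def.
rewrite ler_pdivlMr ?ltr0z // ltr_pdivrMr ?ltr0z // -!intrM ler_int ltr_int.
have := divz_eq x d; have := modz_ge0 x (lt0r_neq0 d0); have := ltz_pmod x d0.
lia.
Qed.

Lemma bigmin_attained (R : realDomainType) n (x0 v : R) (F : 'I_n -> R) :
  v <= x0 -> (forall j, v <= F j) -> (exists j, F j = v) ->
  \big[Num.min/x0]_(j < n) F j = v.
Proof.
move=> vx0 vF [j Fj]; subst v; apply/eqP; rewrite eq_le; apply/andP; split.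
  by rewrite (bigD1 j) //= ge_min lexx.
apply: (big_ind (fun x => F j <= x)) => // x y Fx Fy.
by rewrite le_min Fx Fy.
Qed.

Lemma frac_mul_nat (k A p : nat) : (0 < p)%N ->
  Defs.frac ((k : int)%:~R * (A : int)%:~R / (p : int)%:~R : rat) = ((k * A) %% p)%N%:R / p%:R.
Proof.
move=> p0; rewrite /Defs.frac -intrM floor_divz ?ltz_nat // -PoszM divz_nat.
rewrite {1}(divn_eq (k * A) p) PoszD PoszM intrD intrM.
have pn : (p%:~R : rat) != 0 by rewrite intr_eq0 -lt0n.
by field.
Qed.

Lemma in_E_modn p A h : (0 < p)%N -> in_E p (Posz A) h =
  [&& (1 <= h)%N, (h < p)%N &
      [forall h' : 'I_h, (1 <= h')%N ==> ((h * A) %% p < (h' * A) %% p)%N]].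
Proof.
move=> p0; congr [&& _, _ & _]; apply: eq_forallb => h'.
by rewrite !frac_mul_nat // ltr_pM2r ?invr_gt0 ?ltr0n // ltr_nat.
Qed.

Section RecordMinimum.

Variables (p A i : nat).
Hypotheses (p_pr : prime p) (A_gt0 : (0 < A)%N) (A_ltp : (A < p)%N) (i_ltp : (i < p)%N).

Lemma in_E_carry m : in_E p (Posz A) (p - i) -> (0 < m <= p - i)%N ->
  (p <= (i * A) %% p + (m * A) %% p)%N.
Proof.
rewrite in_E_modn ?(prime_gt0 p_pr) // => /and3P[_ pi_ltp /forallP rec] /andP[m0 m_le].
have i0 : (0 < i)%N by lia.
have compl := modn_mul_compl p_pr A_gt0 A_ltp (introT andP (conj i0 i_ltp)).
case: (ltngtP m (p - i)) m_le => // [m_lt|->] _; last by rewrite compl.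
have := rec (Ordinal m_lt); rewrite /= m0 /=; lia.
Qed.

Lemma notin_E_no_carry : ~~ in_E p (Posz A) (p - i) ->
  exists2 m, (0 < m <= p - i)%N & ((i * A) %% p + (m * A) %% p < p)%N.
Proof.
case: (posnP i) => [-> _|i0].
  by exists 1%N; rewrite ?mul0n ?mod0n ?mul1n ?modn_small //; lia.
have compl := modn_mul_compl p_pr A_gt0 A_ltp (introT andP (conj i0 i_ltp)).
have [pi_ge1 pi_ltp] : (1 <= p - i)%N /\ (p - i < p)%N by lia.
rewrite in_E_modn ?(prime_gt0 p_pr) // pi_ge1 pi_ltp /= negb_forall.
case/existsP => h'; rewrite negb_imply -leqNgt => /andP[h'0 h'_ge].
exists h'; first by rewrite h'0 ltnW.
have := modn_mul_neq p_pr A_gt0 A_ltp h'0 (introT andP (conj (ltn_ord h') pi_ltp)).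
lia.
Qed.

End RecordMinimum.

Section NuDifferences.

Variables (p : nat) (l : int).
Hypothesis p_pr : prime p.

Lemma rem_a_nat : ~~ ((p : int) %| l)%Z -> exists2 A : nat, rem_a p l = A & (0 < A < p)%N.
Proof.
move=> p_ndvd_l; have p0 : 0 < (p : int) by rewrite ltz_nat prime_gt0.
have := modz_ge0 l (lt0r_neq0 p0); have := ltz_pmod l p0.
have : rem_a p l != 0 by apply: contra p_ndvd_l => /eqP /dvdz_mod0P.
rewrite /rem_a; case: (l %% p)%Z => // A A0 Ap _; exists A => //; lia.
Qed.

Lemma a0_divz : a0 p l = (l %/ p)%Z.
Proof. by rewrite /a0 floor_divz // ltz_nat prime_gt0. Qed.

Lemma nu_sub (A : nat) i j : rem_a p l = A ->
  nu p l (i + j) - nu p l j =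
    i%:Z * a0 p l + ((i * A) %/ p)%N%:Z + (p <= (i * A) %% p + (j.+1 * A) %% p)%N%:Z.
Proof.
move=> remA; have p0 := prime_gt0 p_pr.
have l_eq : l = a0 p l * p + A by rewrite a0_divz -remA; exact: divz_eq.
have nuE k : nu p l k = k%:Z * a0 p l + ((k.+1 * A) %/ p)%N%:Z.
  rewrite /nu floor_divz ?ltz_nat // remA.
  have -> : A%:Z + k%:Z * l = k%:Z * a0 p l * p + (k.+1 * A)%N%:Z.
    by rewrite {1}l_eq PoszM -addn1 PoszD; ring.
  by rewrite divzMDl ?lt0r_neq0 ?ltz_nat // divz_nat.
rewrite !nuE.
have -> : ((i + j).+1 * A = i * A + j.+1 * A)%N by ring.
by rewrite divnD // !PoszD; ring.
Qed.

End NuDifferences.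

Theorem lemma7p1 (p : nat) (l : int) :
  prime p -> odd p -> ~~ ((p : int) %| l)%Z ->
  forall i : nat, (i <= p - 1)%N ->
    n_ p l i = (i : int) * a0 p l
               + Num.floor ((i : int)%:~R * (rem_a p l)%:~R / (p : int)%:~R : rat)
               + eps p l i.
Proof.
move=> p_pr _ p_ndvd_l i i_le; have p0 := prime_gt0 p_pr.
have i_ltp : (i < p)%N by lia.
have [A remA /andP[A0 Ap]] := rem_a_nat p_pr p_ndvd_l.
have nuE j := nu_sub p_pr i j remA.
rewrite /n_ /eps remA -intrM floor_divz ?ltz_nat // -PoszM divz_nat.
rewrite -[nu p l i](congr1 _ (addn0 i)) nuE.
under eq_bigr => j _ do rewrite nuE.
case: ifP => [E|/negbT notE].
- have carry_all j : (j < p - i)%N -> (p <= (i * A) %% p + (j.+1 * A) %% p)%N.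
    by move=> j_lt; apply: (in_E_carry p_pr A0 Ap i_ltp E); lia.
  have pi0 : (0 < p - i)%N by lia.
  apply: bigmin_attained => [|j|]; first by rewrite lerD2l (carry_all 0%N).
    by rewrite lerD2l carry_all.
  by exists (Ordinal pi0); rewrite carry_all.
- have [m /andP[m0 m_le] no_carry] := notin_E_no_carry p_pr A0 Ap i_ltp notE.
  have mj : (m.-1 < p - i)%N by lia.
  apply: bigmin_attained => [|j|]; rewrite ?lerD2l ?lez_nat //.
  by exists (Ordinal mj); rewrite /= prednK // leqNgt no_carry.
Qed.
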